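(* Consider an instance of Matroidal Demand Matching with optimum value $\mathrm{OPT}$. For each $\epsilon>0$ there is a feasible solution $M\subseteq E$ with the following properties: (1) $p(M)\ge(1-2\epsilon)\,\mathrm{OPT}$; (2) for each $v\in V$ there is some $M_v\subseteq M$ with $|M_v|\le 1/\epsilon^2$ such that $d_{v,e}\le\epsilon\cdot\big(b_v-\sum_{f\in\delta(v)\cap M_v}d_{v,f}\big)$ for all $e\in\delta(v)\cap(M\setminus M_v)$.
   Context: Matroidal Demand Matching: a graph $G=(V,E)$ (parallel edges allowed) with capacities $b_v\ge0$, for each edge $e=uv$ demands $d_{u,e},d_{v,e}\ge0$ and a profit $p_e\ge0$, and a matroid $\mathcal M=(E,\mathcal I)$; a set $F\subseteq E$ is feasible if $F\in\mathcal I$ and $\sum_{e\in\delta(v)\cap F}d_{v,e}\le b_v$ for all $v\in V$; the goal is to maximize $p(F)=\sum_{e\in F}p_e$ over feasible $F$. $\delta(v)$ is the set of edges incident to $v$. *)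

From HB Require Import structures.
From mathcomp Require Import all_boot all_order all_algebra.
Set Implicit Arguments. Unset Strict Implicit. Unset Printing Implicit Defensive.
Import Order.TTheory GRing.Theory Num.Theory.
Local Open Scope ring_scope.

Definition is_matroid (E : finType) (I : {set {set E}}) : Prop :=
  [/\ set0 \in I,
      (forall A B : {set E}, B \in I -> A \subset B -> A \in I) &
      (forall A B : {set E}, A \in I -> B \in I -> (#|A| < #|B|)%N ->
         exists2 x, x \in B :\: A & x |: A \in I)].

Definition delta (V E : finType) (ends : E -> V * V) (v : V) : {set E} :=
  [set e | ((ends e).1 == v) || ((ends e).2 == v)].

Definition profit (R : numDomainType) (E : finType) (p : E -> R) (F : {set E}) : R :=
  \sum_(e in F) p e.

Definition load (R : numDomainType) (V E : finType) (ends : E -> V * V)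
  (d : V -> E -> R) (v : V) (F : {set E}) : R :=
  \sum_(e in delta ends v :&: F) d v e.

Definition mdm_feasible (R : numDomainType) (V E : finType) (ends : E -> V * V)
  (b : V -> R) (d : V -> E -> R) (I : {set {set E}}) (F : {set E}) : Prop :=
  F \in I /\ forall v : V, load ends d v F <= b v.

Definition mdm_optimal (R : numDomainType) (V E : finType) (ends : E -> V * V)
  (b : V -> R) (d : V -> E -> R) (p : E -> R) (I : {set {set E}}) (F : {set E}) : Prop :=
  mdm_feasible ends b d I F /\
  forall G : {set E}, mdm_feasible ends b d I G -> profit p G <= profit p F.

From HB Require Import structures.
From mathcomp Require Import all_boot all_order all_algebra.
From mathcomp Require Import zify lra.
Set Implicit Arguments. Unset Strict Implicit. Unset Printing Implicit Defensive.
Import Order.TTheory GRing.Theory Num.Theory.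
Local Open Scope ring_scope.

(* Fix s with s eps <= 1 < (s + 1) eps. At a vertex v, peel the edges of
   delta(v) ∩ OPT into consecutive blocks, each consisting of the s remaining
   edges of largest demand. One of the first s + 1 blocks carries at most an
   eps-fraction of the profit of delta(v) ∩ OPT: delete it, and let M_v be the
   at most s^2 edges of the earlier blocks. Each later edge has demand at most
   that of each of the s edges of the deleted block, so (s + 1) d_{v,e} is at
   most the demand of OPT outside M_v, hence at most b_v - d_v(M_v).
   Deleting edges preserves feasibility, and since an edge has at most two
   endpoints the deleted blocks cost at most 2 eps OPT. *)

Lemma ler_sum_subset (R : numDomainType) (T : finType) (f : T -> R) (A B : {set T}) :
  (forall x, 0 <= f x) -> A \subset B -> \sum_(x in A) f x <= \sum_(x in B) f x.
Proof.
move=> f_ge0 AB; rewrite [leRHS](big_setID A) /= (setIidPr AB) lerDl.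
exact: sumr_ge0.
Qed.

Lemma ler_sum_bigcup (R : numDomainType) (I T : finType) (A : I -> {set T}) (f : T -> R) :
  (forall x, 0 <= f x) -> \sum_(x in \bigcup_i A i) f x <= \sum_i \sum_(x in A i) f x.
Proof.
move=> f_ge0; rewrite (exchange_big_dep (mem (\bigcup_i A i))) /=; last first.
  by move=> i x _ xAi; apply/bigcupP; exists i.
apply: ler_sum => x /bigcupP [i _ xAi].
by rewrite (bigD1 i) //= lerDl; apply: sumr_ge0.
Qed.

Lemma ler_eps_natM (R : realFieldType) (n : nat) (eps a c : R) :
  0 <= eps -> 0 <= a -> 1 <= n%:R * eps -> n%:R * a <= c -> a <= eps * c.
Proof. by move=> eps_ge0 a_ge0 n_eps na_c; nra. Qed.

Section HeaviestElements.
Variables (R : realFieldType) (T : finType) (w q : T -> R).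
Implicit Types (S : {set T}) (k j : nat).

Definition heavy_subset (k : nat) (S B : {set T}) : bool :=
  [&& B \subset S, #|B| == minn k #|S| &
      [forall x in B, forall y in S :\: B, w y <= w x]].

Lemma exists_heavy_subset (k : nat) (S : {set T}) : exists B, heavy_subset k S B.
Proof.
elim: k => [|k [B /and3P [BS /eqP cardB /forallP heavyB]]].
  exists set0; rewrite /heavy_subset sub0set cards0 min0n eqxx /=.
  by apply/forallP => x; rewrite in_set0.
have [SB0 | [x0 x0_SB]] := set_0Vmem (S :\: B).
  have SB : S \subset B by rewrite -setD_eq0 SB0.
  exists B; rewrite /heavy_subset BS /=; apply/andP; split; last exact/forallP.
  have BSeq : B = S by apply/eqP; rewrite eqEsubset BS SB.
  by apply/eqP; move: cardB; rewrite BSeq; lia.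
have [x x_SB x_max] := arg_maxP w x0_SB.
have [xS xB] := setDP x_SB.
have ltBS : (#|B| < #|S|)%N by apply/proper_card/properP; split=> //; exists x.
exists (x |: B); apply/and3P; split.
- by rewrite subUset sub1set xS BS.
- by rewrite cardsU1 xB cardB; apply/eqP; move: ltBS; rewrite cardB; lia.
- apply/forallP => z; apply/implyP => z_xB; apply/forallP => y; apply/implyP.
  rewrite setDUr in_setI => /andP [y_Sx y_SB]; move: y_Sx; rewrite in_setD1 => /andP [_].
  case/setU1P: z_xB => [-> | zB]; first by move=> _; exact: x_max.
  by move=> _; move: (heavyB z); rewrite zB => /forallP /(_ y); rewrite y_SB.
Qed.

Definition heaviest (k : nat) (S : {set T}) : {set T} := xchoose (exists_heavy_subset k S).

Lemma heaviest_sub k S : heaviest k S \subset S.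
Proof. by case/and3P: (xchooseP (exists_heavy_subset k S)). Qed.

Lemma card_heaviest k S : #|heaviest k S| = minn k #|S|.
Proof. by case/and3P: (xchooseP (exists_heavy_subset k S)) => _ /eqP. Qed.

Lemma heaviest_max k S x y :
  x \in heaviest k S -> y \in S :\: heaviest k S -> w y <= w x.
Proof.
case/and3P: (xchooseP (exists_heavy_subset k S)) => _ _ /forallP heavy xH yS.
by move: (heavy x); rewrite xH => /forallP /(_ y); rewrite yS.
Qed.

Hypothesis w_ge0 : forall x, 0 <= w x.

Lemma heaviest_bound k S e :
  e \in S :\: heaviest k S -> k.+1%:R * w e <= \sum_(x in S) w x.
Proof.
move=> eSH; have [eS eH] := setDP eSH.
have ltHS : (#|heaviest k S| < #|S|)%N.
  by apply/proper_card/properP; split; [exact: heaviest_sub | exists e].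
have cardH : #|heaviest k S| = k by move: ltHS; rewrite card_heaviest; lia.
have sumH : k%:R * w e <= \sum_(x in heaviest k S) w x.
  rewrite mulr_natl -[in X in _ *+ X]cardH -sumr_const.
  by apply: ler_sum => x xH; apply: heaviest_max xH eSH.
rewrite -natr1 mulrDl mul1r [leRHS](big_setID (heaviest k S)) /=.
rewrite (setIidPr (heaviest_sub k S)) lerD //.
by rewrite -[w e](big_set1 +%R) ler_sum_subset // sub1set.
Qed.

Definition peel (k j : nat) (S : {set T}) : {set T} :=
  iter j (fun X => X :\: heaviest k X) S.

Lemma peel_sub k j S : peel k j S \subset S.
Proof.
elim: j => [|j IHj] /=; first exact: subxx.
exact: subset_trans (subsetDl _ _) IHj.
Qed.

Lemma card_peel k j S : (#|S| <= #|peel k j S| + j * k)%N.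
Proof.
elim: j => [|j IHj]; first by rewrite addn0.
rewrite [peel _ _ _]/= cardsD (setIidPr (heaviest_sub _ _)) card_heaviest.
by move: IHj; lia.
Qed.

Lemma sum_peel k j S :
  \sum_(x in S) q x =
  \sum_(i < j) \sum_(x in heaviest k (peel k i S)) q x + \sum_(x in peel k j S) q x.
Proof.
elim: j => [|j IHj]; first by rewrite big_ord0 add0r.
rewrite big_ord_recr /= IHj -addrA; congr (_ + _).
by rewrite [LHS](big_setID (heaviest k (peel k j S))) /= (setIidPr (heaviest_sub _ _)).
Qed.

Hypothesis q_ge0 : forall x, 0 <= q x.

Lemma exists_light_block k S :
  exists j : 'I_k.+1,
    k.+1%:R * \sum_(x in heaviest k (peel k j S)) q x <= \sum_(x in S) q x.
Proof.
pose block (i : 'I_k.+1) := \sum_(x in heaviest k (peel k i S)) q x.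
have [j _ j_min] := arg_minP block (isT : predT ord0).
exists j; apply: le_trans (_ : \sum_(i < k.+1) block i <= _).
  rewrite mulr_natl -[in X in _ *+ X](card_ord k.+1) -sumr_const.
  by apply: ler_sum => i _; apply: j_min.
by rewrite (sum_peel k k.+1 S) lerDl sumr_ge0.
Qed.

Definition eps_split (eps : R) (s : nat) (S Rm Mv : {set T}) : Prop :=
  [/\ Mv \subset S, (#|Mv| <= s * s)%N,
      \sum_(x in Rm) q x <= eps * \sum_(x in S) q x &
      forall e, e \in S :\: (Rm :|: Mv) -> w e <= eps * \sum_(x in S :\: Mv) w x].

Lemma exists_eps_split eps s S :
  0 <= eps -> 1 <= s.+1%:R * eps \/ (#|S| <= s)%N ->
  exists Rm Mv, eps_split eps s S Rm Mv.
Proof.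
move=> eps_ge0 [s_eps | small_S]; last first.
  exists set0, S; split => //.
  - by move: small_S; nia.
  - by rewrite big_set0 mulr_ge0 // sumr_ge0.
  - by move=> e; rewrite set0U setDv in_set0.
have [j light_j] := exists_light_block s S.
set P := peel s j S; set H := heaviest s P.
have PS : P \subset S by apply: peel_sub.
exists H, (S :\: P); split.
- exact: subsetDl.
- have js : (j * s <= s * s)%N by rewrite leq_mul2r -ltnS ltn_ord orbT.
  by move: (card_peel s j S) js; rewrite -/P cardsD (setIidPr PS); lia.
- by apply: ler_eps_natM light_j => //; apply: sumr_ge0.
- have -> : S :\: (S :\: P) = P by rewrite setDDr setDv set0U (setIidPr PS).
  move=> e; rewrite setDUr !inE => /and3P [/andP [eH eS] eP _].
  have eP' : e \in P :\: H by rewrite inE eH; move: eP; rewrite eS andbT negbK.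
  exact: ler_eps_natM eps_ge0 (w_ge0 e) s_eps (heaviest_bound eP').
Qed.

End HeaviestElements.

(* The second alternative is for non-archimedean [R], where [n%:R * eps <= 1]
   may hold for every [n]; a budget [s >= #|E|] then lets M_v be all of
   delta(v) ∩ OPT. *)
Lemma exists_block_size (R : realFieldType) (eps : R) (m : nat) :
  exists s : nat, s%:R * eps <= 1 /\ (1 <= s.+1%:R * eps \/ (m <= s)%N).
Proof.
have exP : exists n, (n <= m)%N && (n%:R * eps <= 1) by exists 0%N; rewrite mul0r ler01.
have ubP n : (n <= m)%N && (n%:R * eps <= 1) -> (n <= m)%N by case/andP.
case: (ex_maxnP exP ubP) => s /andP [s_m s_eps] s_max.
exists s; split => //; have [lt_s_m | ] := ltnP s m; last by right.
left; apply: ltW; rewrite ltNge; apply/negP => s1_eps.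
by have := s_max s.+1; rewrite lt_s_m s1_eps ltnn => /(_ isT).
Qed.

Lemma natr_sqr_le_inv_sqr (R : realFieldType) (eps : R) (s : nat) :
  0 < eps -> s%:R * eps <= 1 -> (s * s)%:R <= 1 / eps ^+ 2.
Proof.
move=> eps_gt0 s_eps; have s_inv : s%:R <= 1 / eps by rewrite ler_pdivlMr.
have -> : 1 / eps ^+ 2 = (1 / eps) ^+ 2 by rewrite expr_div_n expr1n.
by rewrite natrM -expr2 lerXn2r // nnegrE // divr_ge0 // ltW.
Qed.

Section DemandMatching.
Variables (R : realFieldType) (V E : finType) (ends : E -> V * V).
Variables (b : V -> R) (d : V -> E -> R) (p : E -> R).
Hypotheses (d_ge0 : forall v e, 0 <= d v e) (p_ge0 : forall e, 0 <= p e).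

Lemma load_subset v (F G : {set E}) :
  G \subset F -> load ends d v G <= load ends d v F.
Proof. by move=> GF; apply: ler_sum_subset; [exact: d_ge0 | exact: setIS]. Qed.

Lemma mdm_feasible_subset (I : {set {set E}}) (F G : {set E}) :
  is_matroid I -> mdm_feasible ends b d I F -> G \subset F ->
  mdm_feasible ends b d I G.
Proof.
case=> _ I_closed _ [FI F_load] GF; split; first exact: I_closed FI GF.
by move=> v; apply: le_trans (F_load v); apply: load_subset.
Qed.

Lemma card_incident (e : E) : (#|[set v | e \in delta ends v]| <= 2)%N.
Proof.
apply: leq_trans (subset_leq_card (_ : _ \subset [set (ends e).1; (ends e).2])) _.
  by apply/subsetP => v; rewrite /delta !inE => /orP [] /eqP ->; rewrite eqxx ?orbT.
by rewrite cards2; case: (_ != _).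
Qed.

Lemma sum_profit_delta (F : {set E}) :
  \sum_v profit p (delta ends v :&: F) <= 2 * profit p F.
Proof.
rewrite /profit (exchange_big_dep (mem F)) /=; last by move=> v e _ /setIP [].
rewrite mulr_sumr; apply: ler_sum => e eF.
rewrite (eq_bigl (mem [set v | e \in delta ends v])); last by move=> v; rewrite !inE eF andbT.
rewrite sumr_const -[_ *+ #|_|]mulr_natr [leRHS]mulrC ler_wpM2l //.
by rewrite (ler_nat _ _ 2) card_incident.
Qed.

Lemma profit_setD_bigcup (F : {set E}) (Rm : V -> {set E}) (eps : R) :
  0 <= eps -> (forall v, profit p (Rm v) <= eps * profit p (delta ends v :&: F)) ->
  (1 - 2 * eps) * profit p F <= profit p (F :\: \bigcup_v Rm v).
Proof.
move=> eps_ge0 Rm_light; set U := \bigcup_v Rm v.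
have F_split : profit p F = profit p (F :&: U) + profit p (F :\: U) by apply: big_setID.
have lost : profit p (F :&: U) <= eps * (2 * profit p F).
  apply: le_trans (ler_sum_subset p_ge0 (subsetIr F U)) _; rewrite /U.
  apply: le_trans (ler_sum_bigcup Rm p_ge0) _.
  apply: le_trans (_ : \sum_v eps * profit p (delta ends v :&: F) <= _).
    by apply: ler_sum => v _; apply: Rm_light.
  by rewrite -mulr_sumr ler_wpM2l // sum_profit_delta.
by move: F_split lost; nra.
Qed.

Lemma residual_capacity v (F Mv G : {set E}) :
  load ends d v F <= b v -> Mv \subset delta ends v :&: F -> G \subset Mv ->
  \sum_(x in (delta ends v :&: F) :\: Mv) d v x <= b v - load ends d v G.
Proof.
move=> F_load Mv_sub GMv; rewrite lerBrDl.
apply: le_trans F_load; rewrite [leRHS](big_setID Mv) /= lerD2r.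
apply: le_trans (load_subset v GMv) _; apply: ler_sum_subset => //.
by rewrite subsetI subsetIr andbT (subset_trans (subsetIr _ _) Mv_sub).
Qed.

Lemma eps_split_residual v (F U Rm Mv : {set E}) (eps : R) (s : nat) :
  0 <= eps -> load ends d v F <= b v -> Rm \subset U ->
  eps_split (d v) p eps s (delta ends v :&: F) Rm Mv ->
  forall e, e \in delta ends v :&: ((F :\: U) :\: (Mv :&: (F :\: U))) ->
    d v e <= eps * (b v - load ends d v (Mv :&: (F :\: U))).
Proof.
move=> eps_ge0 F_load RmU [Mv_sub _ _ rest_light] e.
move=> /setIP [e_delta /setDP [e_M e_MvM]]; have [eF eU] := setDP e_M.
have e_rest : e \in (delta ends v :&: F) :\: (Rm :|: Mv).
  have eRm : e \notin Rm by apply: contraNN eU => /(subsetP RmU).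
  have eMv : e \notin Mv by apply: contraNN e_MvM => eMv; rewrite in_setI eMv e_M.
  by rewrite in_setD in_setU in_setI (negPf eRm) (negPf eMv) e_delta eF.
apply: le_trans (rest_light e e_rest) _; rewrite ler_wpM2l //.
exact: residual_capacity F_load Mv_sub (subsetIl _ _).
Qed.

End DemandMatching.

Theorem lemma9 (R : realFieldType) (V E : finType) (ends : E -> V * V)
  (b : V -> R) (d : V -> E -> R) (p : E -> R) (I : {set {set E}})
  (Hends : forall e, (ends e).1 != (ends e).2)
  (Hb : forall v, 0 <= b v) (Hd : forall v e, 0 <= d v e) (Hp : forall e, 0 <= p e)
  (HI : is_matroid I)
  (Fopt : {set E}) (Hopt : mdm_optimal ends b d p I Fopt)
  (eps : R) (Heps : 0 < eps) :
  exists M : {set E},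
    [/\ mdm_feasible ends b d I M,
        profit p M >= (1 - 2 * eps) * profit p Fopt &
        forall v : V, exists Mv : {set E},
          [/\ Mv \subset M,
              (#|Mv|%:R <= 1 / eps ^+ 2) &
              forall e, e \in delta ends v :&: (M :\: Mv) ->
                d v e <= eps * (b v - load ends d v Mv)]].
Proof.
have [Fopt_feas _] := Hopt; have Fopt_load := Fopt_feas.2; have eps_ge0 := ltW Heps.
have [s [s_eps s_large]] := exists_block_size eps #|E|.
have /fin_all_exists [part part_ok] (v : V) : exists RM : {set E} * {set E},
    eps_split (d v) p eps s (delta ends v :&: Fopt) RM.1 RM.2.
  have [|Rm [Mv ok]] :=
    exists_eps_split (Hd v) Hp (S := delta ends v :&: Fopt) (s := s) eps_ge0.
    by case: s_large => [|/(leq_trans (max_card _))]; [left | right].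
  by exists (Rm, Mv).
exists (Fopt :\: \bigcup_v (part v).1); split.
- by apply: (mdm_feasible_subset Hd HI Fopt_feas); apply: subsetDl.
- by apply: (profit_setD_bigcup (ends := ends)) => // v; case: (part_ok v).
- move=> v; have [Mv_sub Mv_card _ _] := part_ok v.
  exists ((part v).2 :&: (Fopt :\: \bigcup_v (part v).1)); split; first exact: subsetIr.
  + apply: le_trans (natr_sqr_le_inv_sqr Heps s_eps); rewrite ler_nat.
    exact: leq_trans (subset_leq_card (subsetIl _ _)) Mv_card.
  + apply: eps_split_residual eps_ge0 (Fopt_load v) _ (part_ok v) => //.
    exact: (bigcup_sup v).
Qed.
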